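(* Let $A, B\in\mathbb{R}^{m\times n}$ with $m < n$, $b\in\mathbb{R}^m$, and $s\in\{-1, 1\}^n$. Let $A = M_A - N_A$ with $\operatorname{rank}(M_A) = m$. (a) Let $1\le p\le\infty$. If $\operatorname{diag}(s)M_A^\dagger b \geq 0$, $\operatorname{diag}(s)M_A^\dagger [N_A\operatorname{diag}(s) + B] \geq 0$ and $\|M_A^\dagger[N_A\operatorname{diag}(s) + B]\|_p< 1$, then there exists a nonnegative solution $y_*$ of the linear system $[A\operatorname{diag}(s)-B]y=b$ such that $x_* = \operatorname{diag}(s)y_*$ is a solution of $Ax-B|x|=b$. (b) If $\operatorname{diag}(s)M_A^\dagger b > 0$ and $\|M_A^\dagger [N_A \operatorname{diag}(s) + B]\|_{\infty} < \gamma/2$, where $\gamma = \dfrac{\min_i |(M_A^\dagger b)_i|}{\max_i |(M_A^\dagger b)_i|}$, then $Ax-B|x|=b$ has infinitely many solutions with the sign pattern $s$.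
   Context: $M^\dagger$ is the Moore–Penrose inverse; $|x|$ is the entrywise absolute value; $\operatorname{diag}(s)$ is the diagonal matrix with diagonal $s$. Vector/matrix inequalities are entrywise. $\|\cdot\|_p$ on matrices is the operator norm induced by the vector $p$-norm. A vector $x$ has sign pattern $s$ if $\operatorname{sign}(x_{(i)})=s_{(i)}$ for all $i$. *)

From HB Require Import structures.
From mathcomp Require Import all_boot all_order all_algebra.
From mathcomp Require Import all_classical all_reals.
From mathcomp Require Import exp.
Set Implicit Arguments. Unset Strict Implicit. Unset Printing Implicit Defensive.
Import Order.TTheory GRing.Theory Num.Theory.
Local Open Scope ring_scope.
Local Open Scope classical_set_scope.

Section Defs.
Variable R : realType.

Definition is_MP_inverse m n (M : 'M[R]_(m, n)) (X : 'M[R]_(n, m)) : Prop :=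
  [/\ M *m X *m M = M, X *m M *m X = X,
      (M *m X)^T = M *m X & (X *m M)^T = X *m M].

Definition mabs m n (M : 'M[R]_(m, n)) : 'M[R]_(m, n) :=
  \matrix_(i, j) `|M i j|.

Definition vnorm (p : \bar R) n (x : 'cV[R]_n) : R :=
  match p with
  | EFin r => powR (\sum_i powR `|x i 0| r) r^-1
  | +oo%E => \big[Num.max/0]_i `|x i 0|
  | -oo%E => 0
  end.

Definition opnorm (p : \bar R) m n (M : 'M[R]_(m, n)) : R :=
  sup [set vnorm p (M *m x) / vnorm p x | x in [set x : 'cV[R]_n | x != 0]].

Definition maxabs n (v : 'cV[R]_n) : R := \big[Num.max/0]_i `|v i 0|.
Definition minabs n (v : 'cV[R]_n) : R := \big[Num.min/maxabs v]_i `|v i 0|.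

Definition has_sign_pattern n (x : 'cV[R]_n) (s : 'rV[R]_n) : Prop :=
  forall i, Num.sg (x i 0) = s 0 i.

End Defs.

(* With D = diag(s), C = M_A^+ (N_A D + B) and c = D M_A^+ b, every vector y with
   y = c + D w + D C y for some w in ker M_A satisfies (A D - B) y = b, because
   M_A M_A^+ = 1; if moreover y >= 0 then x = D y has |x| = y and solves A x - B|x| = b.
   Since D is an isometry for every p-norm, T = D C is a contraction as soon as
   ||C||_p < 1, so y = c + D w + T y has a unique solution.  In (a), c >= 0 and T >= 0
   force the solution with w = 0 to be nonnegative.  In (b), the bound on ||C||_oo
   leaves a margin around min_i c_i > 0 that survives perturbing c by any D w with
   small max-norm; as m < n, ker M_A contains a line, and its points give infinitely
   many distinct positive y, hence solutions with sign pattern s. *)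
From HB Require Import structures.
From mathcomp Require Import all_boot all_order all_algebra.
From mathcomp Require Import all_classical all_reals.
From mathcomp Require Import exp.
From mathcomp Require Import lra.
Import Order.TTheory GRing.Theory Num.Theory.
Local Open Scope ring_scope.
Local Open Scope classical_set_scope.
Set Implicit Arguments. Unset Strict Implicit. Unset Printing Implicit Defensive.

Section VectorNorms.
Variables (R : realType) (p : \bar R).
Hypothesis p_ge1 : (1 <= p)%E.

Lemma exponent_cases : (exists2 r : R, 1 <= r & p = r%:E) \/ p = +oo%E.
Proof. by move: p_ge1; case: p => [r r_ge1||]; [left; exists r | right |]. Qed.

Lemma sum_powR_ge0 n (P : pred 'I_n) (f : 'I_n -> R) r :
  0 <= \sum_(i | P i) powR (f i) r.
Proof. by apply: sumr_ge0 => i _; exact: powR_ge0. Qed.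

Lemma maxabs_ge0 n (x : 'cV[R]_n) : 0 <= maxabs x.
Proof. exact: bigmax_ge_id. Qed.

Lemma vnorm_ge0 n (x : 'cV[R]_n) : 0 <= vnorm p x.
Proof. by case: exponent_cases => [[r _ ->]|->]; [exact: powR_ge0 | exact: maxabs_ge0]. Qed.

Lemma vnorm_eq_norm n (x y : 'cV[R]_n) :
  (forall i, `|x i 0| = `|y i 0|) -> vnorm p x = vnorm p y.
Proof.
move=> xy; case: exponent_cases => [[r _ ->]|->] /=.
  by congr (powR _ _); apply: eq_bigr => i _; rewrite xy.
by apply: eq_bigr => i _; rewrite xy.
Qed.

Lemma vnorm_le_norm n (x y : 'cV[R]_n) :
  (forall i, `|x i 0| <= `|y i 0|) -> vnorm p x <= vnorm p y.
Proof.
move=> xy; case: exponent_cases => [[r r_ge1 ->]|->] /=; last first.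
  apply: bigmax_le => [|j _]; first exact: bigmax_ge_id.
  exact: le_trans (xy j) (le_bigmax _ _ _).
have r_ge0 : 0 <= r by apply: le_trans r_ge1.
apply: ge0_ler_powR; rewrite ?invr_ge0 ?nnegrE ?sum_powR_ge0 //.
by apply: ler_sum => j _; apply: ge0_ler_powR; rewrite ?nnegrE.
Qed.

Lemma vnorm0 n : vnorm p (0 : 'cV[R]_n) = 0.
Proof.
case: exponent_cases => [[r r_ge1 ->]|->] /=; last first.
  apply/le_anti; rewrite bigmax_ge_id andbT.
  by apply: bigmax_le => // i _; rewrite mxE normr0.
have r_neq0 : r != 0 by rewrite gt_eqF // (lt_le_trans ltr01).
rewrite big1 ?powR0 ?invr_neq0 // => i _.
by rewrite mxE normr0 powR0.
Qed.

Lemma norm_le_vnorm n (x : 'cV[R]_n) i : `|x i 0| <= vnorm p x.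
Proof.
case: exponent_cases => [[r r_ge1 ->]|->] /=; last exact: le_bigmax.
have r_neq0 : r != 0 by rewrite gt_eqF // (lt_le_trans ltr01).
rewrite -{1}[`|x i 0|]powRr1 // -(mulfV r_neq0) powRrM.
apply: ge0_ler_powR; rewrite ?invr_ge0 ?nnegrE ?powR_ge0 ?sum_powR_ge0 //.
  exact: le_trans r_ge1.
by rewrite (bigD1 i) //= lerDl sum_powR_ge0.
Qed.

Lemma maxabs_le_vnorm n (x : 'cV[R]_n) : maxabs x <= vnorm p x.
Proof. by apply: bigmax_le => [|i _]; [exact: vnorm_ge0 | exact: norm_le_vnorm]. Qed.

Lemma col_neq0 n (x : 'cV[R]_n) : x != 0 -> exists i, x i 0 != 0.
Proof.
move=> x_neq0; apply/existsP; apply: contraNT x_neq0; rewrite negb_exists => /forallP x0.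
by apply/eqP/matrixP => i j; rewrite (ord1 j) mxE; apply/eqP/negPn/x0.
Qed.

Lemma maxabs_gt0 n (x : 'cV[R]_n) : x != 0 -> 0 < maxabs x.
Proof.
move=> /col_neq0 [i xi_neq0].
by apply: lt_le_trans (le_bigmax _ _ i); rewrite normr_gt0.
Qed.

Lemma vnorm_gt0 n (x : 'cV[R]_n) : x != 0 -> 0 < vnorm p x.
Proof. by move=> /maxabs_gt0 x_gt0; apply: lt_le_trans x_gt0 (maxabs_le_vnorm x). Qed.

Lemma vnorm_le_maxabs n : exists2 K : R, 0 <= K &
  forall x : 'cV[R]_n, vnorm p x <= K * maxabs x.
Proof.
case: exponent_cases => [[r r_ge1 ->]|->] /=; last by exists 1 => // x; rewrite mul1r.
have r_ge0 : 0 <= r by apply: le_trans r_ge1.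
have r_neq0 : r != 0 by rewrite gt_eqF // (lt_le_trans ltr01).
exists (powR n%:R r^-1) => [|x]; first exact: powR_ge0.
have x_ge0 := maxabs_ge0 x.
have -> : powR n%:R r^-1 * maxabs x = powR (n%:R * powR (maxabs x) r) r^-1.
  by rewrite powRM ?powR_ge0 // -powRrM mulfV // powRr1.
apply: ge0_ler_powR; rewrite ?invr_ge0 ?nnegrE ?mulr_ge0 ?powR_ge0 ?sum_powR_ge0 //.
rewrite -[n in n%:R](card_ord n) mulr_natl -sumr_const; apply: ler_sum => i _.
by apply: ge0_ler_powR; rewrite ?nnegrE //; exact: le_bigmax.
Qed.

Lemma maxabs_mulmx_le m n (M : 'M[R]_(m, n)) (x : 'cV[R]_n) :
  maxabs (M *m x) <= (\sum_i \sum_j `|M i j|) * maxabs x.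
Proof.
have x_ge0 := maxabs_ge0 x.
have rowsum_ge0 (i : 'I_m) : 0 <= \sum_j `|M i j| by rewrite sumr_ge0.
apply: bigmax_le => [|i _]; first by rewrite mulr_ge0 // sumr_ge0.
rewrite mxE; apply: le_trans (ler_norm_sum _ _ _) _.
apply: (@le_trans _ _ ((\sum_j `|M i j|) * maxabs x)).
  rewrite mulr_suml; apply: ler_sum => j _; rewrite normrM.
  by apply: ler_wpM2l => //; exact: le_bigmax.
by apply: ler_wpM2r => //; rewrite (bigD1 i) //= lerDl sumr_ge0.
Qed.

Lemma opnorm_ub m n (M : 'M[R]_(m, n)) (x : 'cV[R]_n) :
  x != 0 -> vnorm p (M *m x) / vnorm p x <= opnorm p M.
Proof.
move=> x_neq0; have [K K_ge0 hK] := @vnorm_le_maxabs m.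
pose S := \sum_i \sum_j `|M i j|.
have S_ge0 : 0 <= S by rewrite sumr_ge0 // => i _; rewrite sumr_ge0.
apply: ub_le_sup; last by exists x.
exists (K * S) => _ [z z_neq0 <-]; rewrite ler_pdivrMr ?vnorm_gt0 //.
apply: le_trans (hK _) _; rewrite -mulrA ler_wpM2l //.
apply: le_trans (maxabs_mulmx_le _ _) _.
by rewrite ler_wpM2l ?maxabs_le_vnorm.
Qed.

Lemma vnorm_mulmx_le m n (M : 'M[R]_(m, n)) (x : 'cV[R]_n) :
  vnorm p (M *m x) <= opnorm p M * vnorm p x.
Proof.
have [->|x_neq0] := eqVneq x 0; first by rewrite mulmx0 !vnorm0 mulr0.
by rewrite -ler_pdivrMr ?vnorm_gt0 //; exact: opnorm_ub.
Qed.

Lemma opnorm_ge0 m n (M : 'M[R]_(m, n)) : (0 < n)%N -> 0 <= opnorm p M.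
Proof.
move=> n_gt0; pose x : 'cV[R]_n := const_mx 1.
have x_neq0 : x != 0.
  by apply/eqP => /matrixP /(_ (Ordinal n_gt0) 0); rewrite !mxE; apply/eqP/oner_neq0.
by apply: le_trans (opnorm_ub M x_neq0); rewrite divr_ge0 ?vnorm_ge0.
Qed.

End VectorNorms.

Definition fixpoint (R : comUnitRingType) n (T : 'M[R]_n) (c : 'cV[R]_n) :=
  invmx (1%:M - T) *m c.

Lemma fixpointE (R : comUnitRingType) n (T : 'M[R]_n) c :
  (1%:M - T) \in unitmx -> fixpoint T c = c + T *m fixpoint T c.
Proof.
move=> unitT; apply/eqP; rewrite -subr_eq -[X in X - _]mul1mx -mulmxBl.
by rewrite /fixpoint mulmxA mulmxV // mul1mx.
Qed.

Lemma fixpoint_inj (R : comUnitRingType) n (T : 'M[R]_n) :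
  (1%:M - T) \in unitmx -> injective (fixpoint T).
Proof. by move=> unitT c1 c2; apply: (can_inj (mulKVmx unitT)). Qed.

Lemma unitmx_1B (F : fieldType) n (T : 'M[F]_n) :
  (forall x : 'cV[F]_n, T *m x = x -> x = 0) -> (1%:M - T) \in unitmx.
Proof.
move=> fixed_eq0; rewrite -unitmx_tr -row_free_unit -kermx_eq0.
apply/rowV0P => v /sub_kermxP /(congr1 trmx).
rewrite trmx_mul trmxK trmx0 mulmxBl mul1mx => /subr0_eq /esym /fixed_eq0 v0.
by rewrite -[v]trmxK v0 trmx0.
Qed.

Section Contraction.
Variables (R : realType) (p : \bar R) (n : nat) (T : 'M[R]_n) (t : R).
Hypotheses (p_ge1 : (1 <= p)%E) (t_lt1 : t < 1).
Hypothesis contractT : forall x, vnorm p (T *m x) <= t * vnorm p x.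

Lemma contraction_expand_eq0 x : vnorm p x <= vnorm p (T *m x) -> x = 0.
Proof.
move=> x_le; apply/eqP; apply: contraLR t_lt1 => x_neq0; rewrite -leNgt.
have x_gt0 := vnorm_gt0 p_ge1 x_neq0.
by rewrite -(ler_pM2r x_gt0) mul1r (le_trans x_le).
Qed.

Lemma contraction_unitmx : (1%:M - T) \in unitmx.
Proof. by apply: unitmx_1B => x Tx; apply: contraction_expand_eq0; rewrite Tx. Qed.

Lemma contraction_fixpointE c : fixpoint T c = c + T *m fixpoint T c.
Proof. exact/fixpointE/contraction_unitmx. Qed.

Lemma contraction_fixpoint_inj : injective (fixpoint T).
Proof. exact/fixpoint_inj/contraction_unitmx. Qed.

(* The negative part z of y satisfies 0 <= z <= T z entrywise, so it cannot be contracted. *)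
Lemma contraction_fixpoint_ge0 (c y : 'cV[R]_n) :
  (forall i j, 0 <= T i j) -> (forall i, 0 <= c i 0) -> y = c + T *m y ->
  forall i, 0 <= y i 0.
Proof.
move=> T_ge0 c_ge0 yE.
pose z : 'cV[R]_n := \col_i Num.max (- y i 0) 0.
have z_ge0 i : 0 <= z i 0 by rewrite mxE le_max lexx orbT.
have z_le_Tz i : z i 0 <= (T *m z) i 0.
  rewrite [z i 0]mxE ge_max; apply/andP; split; last first.
    by rewrite mxE sumr_ge0 // => j _; rewrite mulr_ge0.
  have -> : - y i 0 = - c i 0 + (T *m - y) i 0 by rewrite {1}yE mulmxN !mxE opprD.
  apply: le_trans (_ : (T *m - y) i 0 <= _); first by rewrite gerDr oppr_le0.
  rewrite !mxE; apply: ler_sum => j _; apply: ler_wpM2l => //.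
  by rewrite !mxE le_max lexx.
have z0 : z = 0.
  apply: contraction_expand_eq0; apply: vnorm_le_norm => // i.
  by rewrite !ger0_norm ?(le_trans (z_ge0 i)).
move=> i; have : - y i 0 <= z i 0 by rewrite mxE le_max lexx.
by rewrite z0 mxE oppr_le0.
Qed.

End Contraction.

(* In the max-norm, y = c + T y stays within t * |y| of c entrywise, and |y| <= hi / (1 - t). *)
Lemma contraction_fixpoint_gt0 (R : realType) n (T : 'M[R]_n) (t lo hi : R)
    (c y : 'cV[R]_n) :
  0 <= t -> t < 1 -> (forall x, vnorm +oo%E (T *m x) <= t * vnorm +oo%E x) ->
  t * hi < (1 - t) * lo -> (forall j, lo <= c j 0) -> (forall j, `|c j 0| <= hi) ->
  y = c + T *m y -> forall i, 0 < y i 0.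
Proof.
move=> t_ge0 t_lt1 contractT lo_hi c_ge c_le yE i.
have oo_ge1 : (1 <= +oo :> \bar R)%E by rewrite leey.
set Y := vnorm +oo%E y.
have Y_ge0 : 0 <= Y := vnorm_ge0 oo_ge1 y.
have Ty_le j : `|(T *m y) j 0| <= t * Y.
  exact: le_trans (norm_le_vnorm oo_ge1 _ j) (contractT y).
have Y_le : Y <= hi + t * Y.
  apply: bigmax_le => [|j _].
    by rewrite addr_ge0 ?mulr_ge0 // (le_trans _ (c_le i)).
  by rewrite yE mxE; apply: le_trans (ler_normD _ _) (lerD (c_le j) (Ty_le j)).
have yi_ge : lo - t * Y <= y i 0.
  rewrite yE mxE; apply: lerD (c_ge i) _; rewrite lerNl.
  by apply: le_trans (Ty_le i); rewrite -normrN ler_norm.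
have : 0 < (1 - t) * y i 0 by nra.
by rewrite pmulr_rgt0 // subr_gt0.
Qed.

Lemma sign_gap_gt0 (R : realType) n (c : 'cV[R]_n) (t : R) (i0 : 'I_n) :
  0 <= t -> (forall i, 0 < c i 0) -> t < minabs c / maxabs c / 2 ->
  t < 1 /\ 0 < (1 - t) * minabs c - t * maxabs c.
Proof.
move=> t_ge0 c_gt0; have c0_gt0 := c_gt0 i0.
have cmin_le : minabs c <= c i0 0 by rewrite -(gtr0_norm c0_gt0); exact: bigmin_le.
have le_cmax : c i0 0 <= maxabs c by rewrite -(gtr0_norm c0_gt0); exact: le_bigmax.
by rewrite !ltr_pdivlMr ?(lt_le_trans c0_gt0 le_cmax) // => ?; split; nra.
Qed.

Lemma fixpoint_perturb_gt0 (R : realType) n (T : 'M[R]_n) (t : R) (c u : 'cV[R]_n) :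
  0 <= t -> (forall x, vnorm +oo%E (T *m x) <= t * vnorm +oo%E x) ->
  (forall i, 0 < c i 0) -> t < minabs c / maxabs c / 2 ->
  (forall j, `|u j 0| <= ((1 - t) * minabs c - t * maxabs c) / 2) ->
  forall i, 0 < fixpoint T (c + u) i 0.
Proof.
move=> t_ge0 contractT c_gt0 t_lt u_le i.
have oo_ge1 : (1 <= +oo :> \bar R)%E by rewrite leey.
have [t_lt1 d_gt0] := sign_gap_gt0 i t_ge0 c_gt0 t_lt.
set d := (1 - t) * minabs c - t * maxabs c in d_gt0 u_le.
apply: (contraction_fixpoint_gt0 (lo := minabs c - d / 2) (hi := maxabs c + d / 2)
  t_ge0 t_lt1 contractT _ _ _ (contraction_fixpointE oo_ge1 t_lt1 contractT _)) => [|j|j].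
- by move: d_gt0; rewrite /d => ?; lra.
- rewrite mxE; apply: lerD; first by rewrite -(gtr0_norm (c_gt0 j)); exact: bigmin_le.
  by rewrite lerNl; apply: le_trans (u_le j); rewrite -normrN ler_norm.
rewrite mxE; apply: le_trans (ler_normD _ _) (lerD _ (u_le j)); exact: le_bigmax.
Qed.

Lemma infinite_set_inj T (S : set T) (f : nat -> T) :
  injective f -> (forall k, S (f k)) -> infinite_set S.
Proof.
move=> f_inj Sf S_fin; apply: infinite_nat.
have <- : f @^-1` S = setT by apply/seteqP; split=> // k _; exact: Sf.
by apply: finite_preimage => // k1 k2 _ _; exact: f_inj.
Qed.

Lemma row_free_mulmx_rinv (F : fieldType) m n (M : 'M[F]_(m, n)) (X : 'M[F]_(n, m)) :
  row_free M -> M *m X *m M = M -> M *m X = 1%:M.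
Proof. by move=> M_free MXM; apply: (row_free_inj M_free); rewrite /= mul1mx. Qed.

Lemma ker_neq0 (F : fieldType) m n (M : 'M[F]_(m, n)) :
  (\rank M < n)%N -> exists2 w : 'cV[F]_n, w != 0 & M *m w = 0.
Proof.
move=> rank_lt; have : kermx M^T != 0 by rewrite kermx_eq0 /row_free mxrank_tr ltn_eqF.
case/rowV0Pn => v /sub_kermxP vM v_neq0; exists v^T.
  by apply: contra_neq v_neq0 => /(congr1 trmx); rewrite trmxK trmx0.
by rewrite -[M]trmxK -trmx_mul vM trmx0.
Qed.

Lemma ker_vector_small (R : realType) m n (M : 'M[R]_(m, n)) (w0 : 'cV[R]_n) (e : R) :
  w0 != 0 -> M *m w0 = 0 -> 0 < e ->
  exists w : 'cV[R]_n, [/\ w != 0, M *m w = 0 & forall i, `|w i 0| <= e].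
Proof.
move=> w0_neq0 Mw0 e_gt0; have w0_gt0 := maxabs_gt0 w0_neq0.
exists ((e / maxabs w0) *: w0); split.
- by rewrite scaler_eq0 negb_or w0_neq0 andbT mulf_neq0 ?invr_neq0 ?gt_eqF.
- by rewrite -scalemxAr Mw0 scaler0.
have e_ge0 := ltW e_gt0.
move=> i; rewrite mxE normrM ger0_norm ?divr_ge0 ?maxabs_ge0 // mulrAC ler_pdivrMr //.
by rewrite ler_wpM2l //; exact: le_bigmax.
Qed.

Lemma scale_invS_inj (R : numFieldType) (V : lmodType R) (w : V) :
  w != 0 -> injective (fun k : nat => k.+1%:R^-1 *: w).
Proof.
move=> w_neq0 k1 k2 /eqP; rewrite -subr_eq0 -scalerBl scaler_eq0 (negbTE w_neq0) orbF.
by rewrite subr_eq0 => /eqP /invr_inj /eqP; rewrite eqr_nat eqSS => /eqP.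
Qed.

Section SignVectors.
Variables (R : realType) (n : nat) (s : 'rV[R]_n).
Hypothesis s_sign : forall i, s 0 i = 1 \/ s 0 i = -1.

Lemma diag_sign_mulmx_id : diag_mx s *m diag_mx s = 1%:M.
Proof.
apply/matrixP => i j; rewrite mul_diag_mx !mxE.
by case: (i == j); rewrite ?mulr0 //; case: (s_sign i) => ->; rewrite ?mulrNN mulr1.
Qed.

Lemma diag_sign_mulmxK k (v : 'M[R]_(n, k)) : diag_mx s *m (diag_mx s *m v) = v.
Proof. by rewrite mulmxA diag_sign_mulmx_id mul1mx. Qed.

Lemma norm_diag_sign_mulmx (v : 'cV[R]_n) i : `|(diag_mx s *m v) i 0| = `|v i 0|.
Proof.
by rewrite mul_diag_mx mxE normrM; case: (s_sign i) => ->; rewrite ?normrN normr1 mul1r.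
Qed.

Lemma maxabs_diag_sign_mulmx (v : 'cV[R]_n) : maxabs (diag_mx s *m v) = maxabs v.
Proof. by apply: eq_bigr => i _; exact: norm_diag_sign_mulmx. Qed.

Lemma minabs_diag_sign_mulmx (v : 'cV[R]_n) : minabs (diag_mx s *m v) = minabs v.
Proof.
rewrite /minabs maxabs_diag_sign_mulmx; apply: eq_bigr => i _.
exact: norm_diag_sign_mulmx.
Qed.

Lemma mabs_diag_sign_mulmx_ge0 (y : 'cV[R]_n) :
  (forall i, 0 <= y i 0) -> mabs (diag_mx s *m y) = y.
Proof.
move=> y_ge0; apply/matrixP => i j.
by rewrite (ord1 j) mxE norm_diag_sign_mulmx ger0_norm.
Qed.

Lemma sign_pattern_diag_sign_mulmx (y : 'cV[R]_n) :
  (forall i, 0 < y i 0) -> has_sign_pattern (diag_mx s *m y) s.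
Proof.
move=> y_gt0 i; rewrite mul_diag_mx mxE sgrM (gtr0_sg (y_gt0 i)) mulr1.
by case: (s_sign i) => ->; [exact: sgr1 | exact: sgrN1].
Qed.

End SignVectors.

Section AbsoluteValueEquation.
Variables (R : realType) (m n : nat) (A B MA NA : 'M[R]_(m, n)) (MAd : 'M[R]_(n, m)).
Variables (b : 'cV[R]_m) (s : 'rV[R]_n).
Hypotheses (s_sign : forall i, s 0 i = 1 \/ s 0 i = -1) (A_split : A = MA - NA).
Hypothesis MA_rinv : MA *m MAd = 1%:M.

Local Notation D := (diag_mx s).
Local Notation C := (MAd *m (NA *m D + B)).
Local Notation solutions :=
  [set x : 'cV[R]_n | A *m x - B *m mabs x = b /\ has_sign_pattern x s].

(* As M_A M_A^+ = 1 and M_A w = 0, multiplying by M_A D gives M_A D y = b + (N_A D + B) y. *)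
Lemma split_solution (w y : 'cV[R]_n) : MA *m w = 0 ->
  y = D *m MAd *m b + D *m w + D *m C *m y -> (A *m D - B) *m y = b.
Proof.
move=> MAw yE.
have MADy : MA *m (D *m y) = b + (NA *m D + B) *m y.
  rewrite {1}yE -!mulmxA -!mulmxDr (diag_sign_mulmxK s_sign) !mulmxDr !mulmxA.
  by rewrite MA_rinv !mul1mx MAw addr0.
rewrite A_split !mulmxBl -!mulmxA MADy mulmxDl -mulmxA.
by rewrite addrA (addrAC b) addrK addrK.
Qed.

Lemma nonneg_solution (y : 'cV[R]_n) :
  (forall i, 0 <= y i 0) -> (A *m D - B) *m y = b ->
  A *m (D *m y) - B *m mabs (D *m y) = b.
Proof. by move=> y_ge0 yE; rewrite mabs_diag_sign_mulmx_ge0 // mulmxA -mulmxBl. Qed.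

Lemma pos_solution (w y : 'cV[R]_n) : MA *m w = 0 -> (forall i, 0 < y i 0) ->
  y = D *m MAd *m b + D *m w + D *m C *m y -> solutions (D *m y).
Proof.
move=> MAw y_gt0 yE; split; last exact: sign_pattern_diag_sign_mulmx.
by apply: nonneg_solution (split_solution MAw yE) => i; exact: ltW.
Qed.

Lemma vnorm_diag_sign_mulmx_le p : (1 <= p)%E ->
  forall x, vnorm p (D *m C *m x) <= opnorm p C * vnorm p x.
Proof.
move=> p_ge1 x; rewrite -mulmxA (vnorm_eq_norm p_ge1 (norm_diag_sign_mulmx s_sign _)).
exact: vnorm_mulmx_le.
Qed.

Lemma nonneg_split_solution p : (1 <= p)%E ->
  (forall i j, 0 <= (D *m MAd *m b) i j) ->
  (forall i j, 0 <= (D *m MAd *m (NA *m D + B)) i j) ->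
  opnorm p C < 1 ->
  exists y : 'cV[R]_n, (forall i j, 0 <= y i j) /\
    (A *m D - B) *m y = b /\ A *m (D *m y) - B *m mabs (D *m y) = b.
Proof.
move=> p_ge1 c_ge0 T_ge0 C_lt1.
have contractT := vnorm_diag_sign_mulmx_le p_ge1.
pose y := fixpoint (D *m C) (D *m MAd *m b).
have yE : y = D *m MAd *m b + D *m C *m y := contraction_fixpointE p_ge1 C_lt1 contractT _.
have y_ge0 : forall i, 0 <= y i 0.
  apply: (contraction_fixpoint_ge0 p_ge1 C_lt1 contractT _ _ yE) => [i j|i].
    by rewrite mulmxA.
  exact: c_ge0.
have ySolve : (A *m D - B) *m y = b.
  by apply: (@split_solution 0); rewrite ?mulmx0 // addr0.
exists y; split; first by move=> i j; rewrite (ord1 j).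
by split; last exact: nonneg_solution.
Qed.

Lemma infinitely_many_sign_solutions (w0 : 'cV[R]_n) : w0 != 0 -> MA *m w0 = 0 ->
  (forall i j, 0 < (D *m MAd *m b) i j) ->
  opnorm +oo%E C < minabs (MAd *m b) / maxabs (MAd *m b) / 2 ->
  infinite_set solutions.
Proof.
move=> w0_neq0 MAw0 Dc_gt0 C_lt.
have oo_ge1 : (1 <= +oo :> \bar R)%E by rewrite leey.
set t := opnorm +oo%E C; set c := D *m MAd *m b.
have [i0 _] := col_neq0 w0_neq0.
have t_ge0 : 0 <= t := opnorm_ge0 oo_ge1 C (leq_ltn_trans (leq0n _) (ltn_ord i0)).
have c_gt0 i : 0 < c i 0 := Dc_gt0 i 0.
have t_lt : t < minabs c / maxabs c / 2.
  by rewrite /c -mulmxA (minabs_diag_sign_mulmx s_sign) (maxabs_diag_sign_mulmx s_sign).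
have [t_lt1 d_gt0] := sign_gap_gt0 i0 t_ge0 c_gt0 t_lt.
have [w [w_neq0 MAw w_le]] := ker_vector_small w0_neq0 MAw0 (divr_gt0 d_gt0 (ltr0Sn _ 1)).
pose e k := k.+1%:R^-1 *: w.
have e_le k j : `|(D *m e k) j 0| <= ((1 - t) * minabs c - t * maxabs c) / 2.
  rewrite (norm_diag_sign_mulmx s_sign) mxE normrM ger0_norm ?invr_ge0 //.
  by rewrite (le_trans _ (w_le j)) // ler_piMl // invf_le1 ?ler1n.
have contractT := vnorm_diag_sign_mulmx_le oo_ge1.
pose y k := fixpoint (D *m C) (c + D *m e k).
apply: (@infinite_set_inj _ _ (fun k => D *m y k)).
  move=> k1 k2 /(congr1 (mulmx D)); rewrite !(diag_sign_mulmxK s_sign).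
  move=> /(contraction_fixpoint_inj oo_ge1 t_lt1 contractT) /addrI /(congr1 (mulmx D)).
  by rewrite !(diag_sign_mulmxK s_sign) => /(scale_invS_inj w_neq0).
move=> k; apply: (pos_solution (w := e k)); first by rewrite -scalemxAr MAw scaler0.
  exact: fixpoint_perturb_gt0 t_ge0 contractT c_gt0 t_lt (e_le k).
exact: contraction_fixpointE oo_ge1 t_lt1 contractT _.
Qed.

End AbsoluteValueEquation.

Unset Implicit Arguments.

Theorem theorem3p6 (R : realType) (m n : nat)
  (A B MA NA : 'M[R]_(m, n)) (MAd : 'M[R]_(n, m)) (b : 'cV[R]_m)
  (s : 'rV[R]_n) :
  (m < n)%N ->
  (forall i, s 0 i = 1 \/ s 0 i = -1) ->
  A = MA - NA ->
  \rank MA = m ->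
  is_MP_inverse MA MAd ->
  (* (a) *)
  (forall p : \bar R, (1 <= p)%E ->
     (forall i j, 0 <= (diag_mx s *m MAd *m b) i j) ->
     (forall i j, 0 <= (diag_mx s *m MAd *m (NA *m diag_mx s + B)) i j) ->
     opnorm p (MAd *m (NA *m diag_mx s + B)) < 1 ->
     exists y : 'cV[R]_n,
       (forall i j, 0 <= y i j) /\
       (A *m diag_mx s - B) *m y = b /\
       A *m (diag_mx s *m y) - B *m mabs (diag_mx s *m y) = b)
  /\
  (* (b) *)
  ((forall i j, 0 < (diag_mx s *m MAd *m b) i j) ->
   opnorm +oo%E (MAd *m (NA *m diag_mx s + B))
     < (minabs (MAd *m b) / maxabs (MAd *m b)) / 2 ->
   infinite_set [set x : 'cV[R]_n |
     A *m x - B *m mabs x = b /\ has_sign_pattern x s]).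
Proof.
move=> mn s_sign A_split MA_rank [MXM _ _ _].
have MA_free : row_free MA by rewrite /row_free MA_rank.
have MA_rinv := row_free_mulmx_rinv MA_free MXM.
split=> [p p_ge1|].
  exact: nonneg_split_solution s_sign A_split MA_rinv p p_ge1.
have [w0 w0_neq0 MAw0] : exists2 w0 : 'cV[R]_n, w0 != 0 & MA *m w0 = 0.
  by apply: ker_neq0; rewrite MA_rank.
exact: infinitely_many_sign_solutions s_sign A_split MA_rinv w0 w0_neq0 MAw0.
Qed.
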